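(* Let $n\le -1$ be an odd integer. Then $$q_n(w)=\frac{p_n(v)\,p_{6-n}(v)}{v^{2-n}}\qquad\text{where } w=2-\frac{(v+1)(v+2)}{v},$$ as an identity of rational functions in $v$.
   Context: Define polynomials $p_n\in\mathbb{Z}[v]$ for odd $n$ as follows. For odd $n\le -1$: $p_{-1}=v^3+2v^2+v+1$, $p_{-3}=-(v^5+3v^4+4v^3+5v^2+4v+2)$, and $p_n=-\big((v^2+v+2)p_{n+2}+v^2p_{n+4}\big)$ for odd $n<-3$. For odd $n\ge 7$: $p_7=-(v^3+2v^2+8v+8)$, $p_9=v^5+4v^4+10v^3+16v^2+24v+16$, and $p_n=-\big((v^2+v+2)p_{n-2}+v^2p_{n-4}\big)$ for odd $n>9$. Define $q_n\in\mathbb{Z}[w]$ for odd $n\le -1$ by $q_{-1}=w^3-w^2+2w-7$, $q_{-3}=w^5-2w^4-2w^3+5w^2+3w-9$, $q_{-5}=w^7-2w^6-4w^5+8w^4+4w^3-7w^2+2w-7$, and $q_n=(w^2-1)(q_{n+2}-q_{n+4})+q_{n+6}$ for odd $n<-5$. *)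

From HB Require Import structures.
From mathcomp Require Import all_boot all_order all_algebra fraction.
Set Implicit Arguments. Unset Strict Implicit. Unset Printing Implicit Defensive.
Import Order.TTheory GRing.Theory Num.Theory.
Local Open Scope ring_scope.

(* p_{-(2k+1)} for k : nat *)
Fixpoint pneg (k : nat) : {poly int} :=
  match k with
  | 0%N => 'X^3 + 2%:P * 'X^2 + 'X + 1
  | 1%N => - ('X^5 + 3%:P * 'X^4 + 4%:P * 'X^3 + 5%:P * 'X^2 + 4%:P * 'X + 2%:P)
  | S ((S k2) as k1) => - (('X^2 + 'X + 2%:P) * pneg k1 + 'X^2 * pneg k2)
  end.

(* p_{2k+7} for k : nat *)
Fixpoint ppos (k : nat) : {poly int} :=
  match k with
  | 0%N => - ('X^3 + 2%:P * 'X^2 + 8%:P * 'X + 8%:P)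
  | 1%N => 'X^5 + 4%:P * 'X^4 + 10%:P * 'X^3 + 16%:P * 'X^2 + 24%:P * 'X + 16%:P
  | S ((S k2) as k1) => - (('X^2 + 'X + 2%:P) * ppos k1 + 'X^2 * ppos k2)
  end.

(* q_{-(2k+1)} for k : nat, polynomial in the variable w *)
Fixpoint qneg (k : nat) : {poly int} :=
  match k with
  | 0%N => 'X^3 - 'X^2 + 2%:P * 'X - 7%:P
  | 1%N => 'X^5 - 2%:P * 'X^4 - 2%:P * 'X^3 + 5%:P * 'X^2 + 3%:P * 'X - 9%:P
  | 2%N => 'X^7 - 2%:P * 'X^6 - 4%:P * 'X^5 + 8%:P * 'X^4 + 4%:P * 'X^3
             - 7%:P * 'X^2 + 2%:P * 'X - 7%:P
  | S ((S ((S k3) as k2)) as k1) => ('X^2 - 1) * (qneg k1 - qneg k2) + qneg k3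
  end.

(* p_n for odd integers n; p_n := 0 outside the defined range (never used) *)
Definition p (n : int) : {poly int} :=
  if n <= -1 then pneg ((`|n|%N - 1) %/ 2)
  else if 7 <= n then ppos ((`|n|%N - 7) %/ 2) else 0.

(* q_n for odd integers n <= -1; q_n := 0 otherwise (never used) *)
Definition q (n : int) : {poly int} :=
  if n <= -1 then qneg ((`|n|%N - 1) %/ 2) else 0.

(* The field of rational functions in v (over Q, realised as the fraction
   field of Z[v]). *)
Notation ratfun := {fraction {poly int}}.

Definition toRF (a : {poly int}) : ratfun := @FracField.tofrac _ a.

Definition vv : ratfun := toRF 'X.

Definition ww : ratfun := 2 - (vv + 1) * (vv + 2) / vv.

Definition evalRF (f : {poly int}) (x : ratfun) : ratfun :=
  (map_poly (fun c : int => toRF c%:P) f).[x].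

From HB Require Import structures.
From mathcomp Require Import all_boot all_order all_algebra fraction ring.
Set Implicit Arguments.
Unset Strict Implicit.
Unset Printing Implicit Defensive.
Import Order.TTheory GRing.Theory Num.Theory.
Local Open Scope ring_scope.

(* Write n = -(2k+1), x_k = p_n(v), y_k = p_{6-n}(v) and
   t_k = q_n(w).  Both x and y satisfy the same two-term recurrence
   u_{k+2} = c u_{k+1} + d u_k with c = -(v^2+v+2), d = -v^2, whose
   characteristic roots a, b have a + b = c and ab = d.  The products
   z_k = x_k y_k are then combinations of a^{2k}, (ab)^k, b^{2k}, hence
   satisfy a three-term recurrence with characteristic polynomial
   (T - a^2)(T - ab)(T - b^2); after the rescaling s_k = z_k / v^{2k+3}
   this becomes s_{k+3} = ((c/v)^2 - 1)(s_{k+2} - s_{k+1}) + s_k, and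
   c/v = w, so it is exactly the recurrence defining q.  As s and t agree
   for k = 0, 1, 2, they agree everywhere.
   The argument is carried out in an arbitrary field with a nonzero v
   (integer polynomials being evaluated through zeval), and the theorem
   follows by specialising v to the indeterminate of Q(v). *)

Lemma recurrence3_unique (T : Type) (f : T -> T -> T -> T) (a b : nat -> T) :
  (forall k, a k.+3 = f (a k.+2) (a k.+1) (a k)) ->
  (forall k, b k.+3 = f (b k.+2) (b k.+1) (b k)) ->
  a 0%N = b 0%N -> a 1%N = b 1%N -> a 2%N = b 2%N -> forall k, a k = b k.
Proof.
move=> ha hb e0 e1 e2 k.
suff [] : [/\ a k = b k, a k.+1 = b k.+1 & a k.+2 = b k.+2] by [].
by elim: k => [|k [IH0 IH1 IH2]]; split=> //; rewrite ha hb IH0 IH1 IH2.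
Qed.

(* Termwise products of two solutions of u_{k+2} = c u_{k+1} + d u_k
   satisfy the recurrence with characteristic roots a^2, ab, b^2. *)
Lemma product_recurrence (R : comPzRingType) (c d : R) (x y : nat -> R) :
  (forall k, x k.+2 = c * x k.+1 + d * x k) ->
  (forall k, y k.+2 = c * y k.+1 + d * y k) ->
  forall k, x k.+3 * y k.+3 = (c ^+ 2 + d) * (x k.+2 * y k.+2)
     + d * (c ^+ 2 + d) * (x k.+1 * y k.+1) - d ^+ 3 * (x k * y k).
Proof. by move=> hx hy k; rewrite !(hx, hy); ring. Qed.

Definition rescaled_product {F : fieldType} (v : F) (x y : nat -> F) (k : nat) : F :=
  x k * y k / ((v ^+ 2) ^+ k * v ^+ 3).

Lemma rescaled_product_recurrence (F : fieldType) (v c : F) (x y : nat -> F) :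
  v != 0 ->
  (forall k, x k.+2 = c * x k.+1 - v ^+ 2 * x k) ->
  (forall k, y k.+2 = c * y k.+1 - v ^+ 2 * y k) ->
  let s := rescaled_product v x y in
  forall k, s k.+3 = ((c / v) ^+ 2 - 1) * (s k.+2 - s k.+1) + s k.
Proof.
move=> v0 hx hy s k.
have rec k' : x k'.+2 = c * x k'.+1 + - v ^+ 2 * x k' by rewrite mulNr hx.
have rec' k' : y k'.+2 = c * y k'.+1 + - v ^+ 2 * y k' by rewrite mulNr hy.
rewrite /s /rescaled_product (product_recurrence rec rec').
rewrite ![(v ^+ 2) ^+ _.+1]exprSr.
by field; rewrite v0 !expf_neq0.
Qed.

Definition zeval {R : comNzRingType} (f : {poly int}) (x : R) : R :=
  (map_poly intr f).[x].

Section ZEval.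
Context {R : comNzRingType} (x : R).

Lemma zevalD f g : zeval (f + g) x = zeval f x + zeval g x.
Proof. by rewrite /zeval rmorphD hornerD. Qed.
Lemma zevalN f : zeval (- f) x = - zeval f x.
Proof. by rewrite /zeval rmorphN hornerN. Qed.
Lemma zevalM f g : zeval (f * g) x = zeval f x * zeval g x.
Proof. by rewrite /zeval rmorphM hornerM. Qed.
Lemma zevalXn n : zeval 'X^n x = x ^+ n.
Proof. by rewrite /zeval map_polyXn hornerXn. Qed.
Lemma zevalX : zeval 'X x = x.
Proof. by rewrite /zeval map_polyX hornerX. Qed.
Lemma zevalC c : zeval c%:P x = c%:~R.
Proof. by rewrite /zeval map_polyC hornerC. Qed.
Lemma zeval1 : zeval 1 x = 1.
Proof. by rewrite -polyC1 zevalC. Qed.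

End ZEval.

Notation zevalE := (zevalD, zevalN, zevalM, zevalXn, zevalX, zevalC, zeval1).

Section InAField.
Variables (F : fieldType) (v : F).
Hypothesis v_neq0 : v != 0.

Let c : F := - (v ^+ 2 + v + 2).
Let w : F := c / v.

Lemma pneg_recurrence k :
  zeval (pneg k.+2) v = c * zeval (pneg k.+1) v - v ^+ 2 * zeval (pneg k) v.
Proof.
have -> : pneg k.+2 = - (('X^2 + 'X + 2%:P) * pneg k.+1 + 'X^2 * pneg k) by [].
by rewrite !zevalE /c; ring.
Qed.

Lemma ppos_recurrence k :
  zeval (ppos k.+2) v = c * zeval (ppos k.+1) v - v ^+ 2 * zeval (ppos k) v.
Proof.
have -> : ppos k.+2 = - (('X^2 + 'X + 2%:P) * ppos k.+1 + 'X^2 * ppos k) by [].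
by rewrite !zevalE /c; ring.
Qed.

Lemma qneg_recurrence k :
  zeval (qneg k.+3) w = (w ^+ 2 - 1) * (zeval (qneg k.+2) w
                          - zeval (qneg k.+1) w) + zeval (qneg k) w.
Proof.
have -> : qneg k.+3 = ('X^2 - 1) * (qneg k.+2 - qneg k.+1) + qneg k by [].
by rewrite !zevalE.
Qed.

Lemma qneg_initial_values :
  [/\ zeval (qneg 0) w * v ^+ 3 = zeval (pneg 0) v * zeval (ppos 0) v,
      zeval (qneg 1) w * v ^+ 5 = zeval (pneg 1) v * zeval (ppos 1) v &
      zeval (qneg 2) w * v ^+ 7 = zeval (pneg 2) v * zeval (ppos 2) v].
Proof. by cbv [qneg pneg ppos]; rewrite !zevalE /w /c; split; field. Qed.

Lemma qneg_product k :
  zeval (qneg k) w = rescaled_product v (zeval^~ v \o pneg) (zeval^~ v \o ppos) k.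
Proof.
have [e0 e1 e2] := qneg_initial_values.
have vn0 m : v ^+ m != 0 by rewrite expf_neq0.
have s_rec := rescaled_product_recurrence (x := zeval^~ v \o pneg)
  (y := zeval^~ v \o ppos) v_neq0 pneg_recurrence ppos_recurrence.
apply: (recurrence3_unique (a := fun k => zeval (qneg k) w)
  (f := fun z2 z1 z0 => (w ^+ 2 - 1) * (z2 - z1) + z0) qneg_recurrence s_rec);
  rewrite /rescaled_product /comp.
- by rewrite -e0 mul1r mulfK.
- by rewrite -e1 expr1 -exprD mulfK.
- by rewrite -e2 -exprM -exprD mulfK.
Qed.

End InAField.

Lemma odd_negative_int (n : int) :
  n <= -1 -> odd `|n|%N -> exists k, n = - (k.*2.+1)%:Z.
Proof.
move=> hn hodd; exists (`|n|%N./2).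
have <- : `|n|%N = (`|n|%N./2).*2.+1 by rewrite -[LHS]odd_double_half hodd add1n.
by rewrite lez0_abs ?opprK // (le_trans hn).
Qed.

Lemma q_odd_negative k : q (- (k.*2.+1)%:Z) = qneg k.
Proof. by rewrite /q /= subn1 /= -muln2 mulnK. Qed.

Lemma p_odd_negative k : p (- (k.*2.+1)%:Z) = pneg k.
Proof. by rewrite /p /= subn1 /= -muln2 mulnK. Qed.

Lemma p_reflected k : p (6 - - (k.*2.+1)%:Z) = ppos k.
Proof.
have -> : 6 - - (k.*2.+1)%:Z = (k.*2 + 7)%N by rewrite opprK -PoszD addnC addSnnS.
by rewrite /p /= lez_nat leq_addl addnK -muln2 mulnK.
Qed.

Lemma toRF_polyC (c : int) : toRF c%:P = c%:~R.
Proof. by rewrite /toRF -[c in LHS]intz !rmorph_int. Qed.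

Lemma evalRF_zeval (f : {poly int}) (x : ratfun) : evalRF f x = zeval f x.
Proof. by rewrite /evalRF /zeval (eq_map_poly toRF_polyC). Qed.

Lemma toRF_zeval (f : {poly int}) : toRF f = zeval f vv.
Proof.
elim/poly_ind: f => [|f c IH]; first by rewrite /toRF /zeval !rmorph0 horner0.
by rewrite zevalD zevalM zevalX zevalC -IH -toRF_polyC /toRF rmorphD rmorphM.
Qed.

Lemma vv_neq0 : vv != 0.
Proof. by rewrite tofrac_eq0 polyX_eq0. Qed.

Lemma w_formula (F : fieldType) (v : F) :
  v != 0 -> 2 - (v + 1) * (v + 2) / v = - (v ^+ 2 + v + 2) / v.
Proof. by move=> v0; field. Qed.

Theorem lemma3p1 (n : int) (hn : n <= -1) (hodd : odd `|n|%N) :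
  evalRF (q n) ww = toRF (p n) * toRF (p (6 - n)) / vv ^ (2 - n).
Proof.
have [k ->] := odd_negative_int hn hodd.
rewrite q_odd_negative p_odd_negative p_reflected evalRF_zeval !toRF_zeval.
rewrite /ww (w_formula vv_neq0) (qneg_product vv_neq0) /rescaled_product.
have -> : 2 - - (k.*2.+1)%:Z = (k.*2 + 3)%N by rewrite opprK -PoszD addnC addSnnS.
by rewrite -exprnP exprD -exprM mul2n.
Qed.
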